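(* Let $q$ be a self-join-free Boolean conjunctive query. Let $C=F_0\to F_1\to\cdots\to F_{k-1}\to F_0$ be an elementary cycle of length $k\ge 2$ in the M-graph of $q$, and identify $C$ with the set $\{F_0,\dots,F_{k-1}\}$. Let $\mathbf{db}$ be a database. Let $\mathbf{o}$ be a minimal (with respect to $\subseteq$) subset of $\mathbf{db}$ satisfying: (1) $\mathbf{o}$ contains every fact $A$ of $\mathbf{db}$ with $\mathrm{atom}(A)\in\{F_0,\dots,F_{k-1}\}$ that has outdegree zero in the $\hookrightarrow_C$-graph; (2) $\mathbf{o}$ contains every fact belonging to some irrelevant $1$-embedding of $C$ in $\mathbf{db}$; (3) $\mathbf{o}$ contains every fact belonging to some $n$-embedding of $C$ in $\mathbf{db}$ with $n\ge 2$; (4) if $\mathbf{o}$ contains some fact of a relevant $1$-embedding of $C$ in $\mathbf{db}$, then $\mathbf{o}$ contains every fact of that $1$-embedding; and (5) if $\mathbf{o}$ contains a fact $A$, then $\mathbf{o}$ includes the block of $A$ in $\mathbf{db}$. Then $\mathbf{o}$ is the maximal garbage set for $C$ in $\mathbf{db}$.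
   Context: Every relation name has a signature $[n,k]$ ($1\le k\le n$; primary-key positions $1,\dots,k$) and a mode in $\{\mathsf{c},\mathsf{i}\}$. For an atom $F$, $\mathrm{key}(F)$ = variables at primary-key positions, $\mathrm{vars}(F)$ = all its variables. Facts are variable-free atoms; key-equal facts share relation name and primary-key values. A database is a finite set of facts with no two distinct key-equal facts of mode $\mathsf{c}$, all of whose relation names occur in $q$; the block of $A$ in $\mathbf{db}$ is the set of facts of $\mathbf{db}$ key-equal to $A$; a repair is a maximal subset without two distinct key-equal facts. A self-join-free Boolean conjunctive query is a finite set of atoms with distinct relation names; $\mathrm{atom}(A)$ is the atom of $q$ with the relation name of fact $A$. $\mathcal{K}(p)=\{\mathrm{key}(F)\to\mathrm{vars}(F)\mid F\in p\}$; $q^{\mathsf{c}}$ = atoms of $q$ of mode $\mathsf{c}$. M-graph of $q$: vertices atoms of $q$, edge $F\to G$ ($F\ne G$) iff $\mathcal{K}(q^{\mathsf{c}})\models\mathrm{vars}(F)\to\mathrm{key}(G)$. $\hookrightarrow$-graph: vertices facts of $\mathbf{db}$, edge $A\hookrightarrow B$ iff there are a valuation $\theta$ of the variables of $q$ and an M-graph edge $F\to G$ with $\theta(q)\subseteq\mathbf{db}$, $A=\theta(F)$, $B$ key-equal to $\theta(G)$. The $\hookrightarrow_C$-graph: vertices the facts $A\in\mathbf{db}$ with $\mathrm{atom}(A)$ in $C$, edge $A\hookrightarrow_C B$ iff $A\hookrightarrow B$ and $C$ has an edge from $\mathrm{atom}(A)$ to $\mathrm{atom}(B)$. An $n$-embedding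 of $C$ in $\mathbf{db}$ is an elementary $\hookrightarrow_C$-cycle of length $nk$ containing no two distinct key-equal facts. A $1$-embedding is relevant if some valuation $\theta$ with $\theta(q)\subseteq\mathbf{db}$ has all facts of the $1$-embedding in $\theta(q)$; otherwise irrelevant. A subset $\mathbf{o}\subseteq\mathbf{db}$ is a garbage set for $q_0\subseteq q$ in $\mathbf{db}$ if (1) for every $A\in\mathbf{o}$, $\mathrm{atom}(A)\in q_0$ and the block of $A$ is included in $\mathbf{o}$; and (2) there is a repair $\mathbf{r}$ of $\mathbf{o}$ such that for every valuation $\theta$ of the variables of $q$, if $\theta(q)\subseteq(\mathbf{db}\setminus\mathbf{o})\cup\mathbf{r}$ then $\theta(q_0)\cap\mathbf{r}=\emptyset$. Garbage sets are closed under union; the maximal garbage set is the largest one. *)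

From mathcomp Require Import all_boot.
Set Implicit Arguments. Unset Strict Implicit. Unset Printing Implicit Defensive.

Record schema (R : eqType) := Schema {
  ar : R -> nat;
  kl : R -> nat;      (* number k of primary-key positions 1..k *)
  modec : R -> bool   (* true = mode c, false = mode i *)
}.

Definition schema_ok (R : eqType) (S : schema R) : Prop :=
  forall r : R, 1 <= kl S r <= ar S r.

Section DB.
Variables (V D R : eqType) (S : schema R).

(* terms: variables (inl) or constants (inr) *)
Definition term := (V + D)%type.
Definition atom := (R * seq term)%type.
Definition fact := (R * seq D)%type.

Definition arel (F : atom) : R := F.1.
Definition aargs (F : atom) : seq term := F.2.
Definition frel (A : fact) : R := A.1.
Definition fargs (A : fact) : seq D := A.2.

Definition vars_of (s : seq term) : seq V :=
  pmap (fun t : term => if t is inl x then Some x else None) s.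
Definition vars (F : atom) : seq V := vars_of (aargs F).
Definition key (F : atom) : seq V := vars_of (take (kl S (arel F)) (aargs F)).

Definition wf_atom (F : atom) : bool := size (aargs F) == ar S (arel F).
Definition wf_fact (A : fact) : bool := size (fargs A) == ar S (frel A).

Definition sjf_query (q : seq atom) : Prop :=
  all wf_atom q /\ uniq (map arel q).

Definition keyeq (A B : fact) : bool :=
  (frel A == frel B) &&
  (take (kl S (frel A)) (fargs A) == take (kl S (frel A)) (fargs B)).

Definition database (q : seq atom) (db : seq fact) : Prop :=
  (forall A, A \in db -> wf_fact A /\ frel A \in map arel q) /\
  (forall A B, A \in db -> B \in db -> keyeq A B -> modec S (frel A) -> A = B).

Definition inst (th : V -> D) (F : atom) : fact :=
  (arel F, map (fun t : term => match t with inl x => th x | inr d => d end)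
               (aargs F)).

Definition embeds_in (q : seq atom) (th : V -> D) (P : fact -> Prop) : Prop :=
  forall H, H \in q -> P (inst th H).

(* Functional dependencies X -> Y as pairs; attribute closure *)
Inductive fd_closure (K : seq (seq V * seq V)) (X : seq V) : V -> Prop :=
| fdc_base x : x \in X -> fd_closure K X x
| fdc_step L Y y : (L, Y) \in K -> (forall z, z \in L -> fd_closure K X z) ->
    y \in Y -> fd_closure K X y.

Definition fd_implies (K : seq (seq V * seq V)) (X Y : seq V) : Prop :=
  forall y, y \in Y -> fd_closure K X y.

Definition Kc (q : seq atom) : seq (seq V * seq V) :=
  [seq (key H, vars H) | H <- q & modec S (arel H)].

Definition medge (q : seq atom) (F G : atom) : Prop :=
  F \in q /\ G \in q /\ F <> G /\ fd_implies (Kc q) (vars F) (key G).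

Fixpoint pathP (T : Type) (e : T -> T -> Prop) (x : T) (s : seq T) : Prop :=
  match s with
  | [::] => True
  | y :: s' => e x y /\ pathP e y s'
  end.
Definition cycleP (T : Type) (e : T -> T -> Prop) (s : seq T) : Prop :=
  match s with
  | [::] => True
  | x :: s' => pathP e x (rcons s' x)
  end.

(* c = [:: F_0; ...; F_{k-1}] is an elementary cycle of the M-graph *)
Definition elem_mcycle (q : seq atom) (c : seq atom) : Prop :=
  uniq c /\ {subset c <= q} /\ cycleP (medge q) c.

Definition hook (q : seq atom) (db : seq fact) (A B : fact) : Prop :=
  B \in db /\
  exists th F G, embeds_in q th (fun X => X \in db) /\ medge q F G /\
    A = inst th F /\ keyeq B (inst th G).

Definition atom_in (c : seq atom) (A : fact) : bool :=
  has (fun F => arel F == frel A) c.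

(* A |->_C B  (C given as its sequence of atoms; cycle edges are F -> next c F) *)
Definition hookC (q c : seq atom) (db : seq fact) (A B : fact) : Prop :=
  A \in db /\ atom_in c A /\ B \in db /\ atom_in c B /\ hook q db A B /\
  exists F, F \in c /\ arel F = frel A /\ arel (next c F) = frel B.

Definition embedding (q c : seq atom) (db : seq fact) (n : nat) (e : seq fact)
  : Prop :=
  uniq e /\ size e = n * size c /\ 0 < size e /\
  (forall A, A \in e -> A \in db /\ atom_in c A) /\
  cycleP (hookC q c db) e /\
  (forall A B, A \in e -> B \in e -> keyeq A B -> A = B).

Definition relevant (q : seq atom) (db : seq fact) (e : seq fact) : Prop :=
  exists th, embeds_in q th (fun X => X \in db) /\
    forall A, A \in e -> exists2 F, F \in q & A = inst th F.

Definition consistent (r : seq fact) : Prop :=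
  forall A B, A \in r -> B \in r -> keyeq A B -> A = B.

Definition repair (o r : seq fact) : Prop :=
  {subset r <= o} /\ consistent r /\
  forall r', {subset r <= r'} -> {subset r' <= o} -> consistent r' ->
    {subset r' <= r}.

Definition garbage (q q0 : seq atom) (db o : seq fact) : Prop :=
  {subset o <= db} /\
  (forall A, A \in o -> atom_in q0 A /\
     (forall B, B \in db -> keyeq A B -> B \in o)) /\
  exists r, repair o r /\
    forall th : V -> D,
      embeds_in q th (fun X => (X \in db /\ X \notin o) \/ X \in r) ->
      forall F, F \in q0 -> inst th F \notin r.

Definition max_garbage (q q0 : seq atom) (db o : seq fact) : Prop :=
  garbage q q0 db o /\ forall o', garbage q q0 db o' -> {subset o' <= o}.

Definition conds (q c : seq atom) (db o : seq fact) : Prop :=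
  {subset o <= db} /\
  (forall A, A \in db -> atom_in c A ->
     (forall B, ~ hookC q c db A B) -> A \in o) /\
  (forall e, embedding q c db 1 e -> ~ relevant q db e ->
     {subset e <= o}) /\
  (forall n e, 2 <= n -> embedding q c db n e -> {subset e <= o}) /\
  (forall e, embedding q c db 1 e -> relevant q db e ->
     has (fun A => A \in o) e -> {subset e <= o}) /\
  (forall A, A \in o -> forall B, B \in db -> keyeq A B -> B \in o).

Definition minimal_conds (q c : seq atom) (db o : seq fact) : Prop :=
  conds q c db o /\
  forall o', {subset o' <= o} -> conds q c db o' -> {subset o <= o'}.

End DB.

(* o is garbage: a repair r of o is grown by adding either a fact of o whose
   hook successors are all covered up to key-equality, or a whole embedding that
   (2) or (3) puts into o, keeping r consistent, closed under hooks up to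
   key-equality, and free of any full image th(C) of a match. When neither step
   applies, the covered part of o still satisfies (1)-(5), so by minimality r
   covers all of o. A match th with th(q) in (db \ o) u r that meets r on C
   would have th(C) in o by (4), hence th(C) in r, which is excluded.

   o is maximal: if a garbage set g with repair r had a fact outside o, its
   block would have a representative in r outside o. From such a fact th(F),
   walk along th(C), which avoids o by (4), up to the first fact dropped by the
   repair of g (one exists because g is garbage), and jump to its
   representative in r, again outside o. By finiteness these walks close up;
   removing key-equal repetitions leaves an n-embedding outside o, so by (2)
   and (3) a relevant 1-embedding th(C) inside (db \ g) u r meeting r,
   contradicting that g is garbage. *)

From mathcomp Require Import all_boot zify.
From Stdlib Require Import Classical ClassicalEpsilon.
(* Imported last, so that its [pathP] and [frel] shadow MathComp's. *)
Set Implicit Arguments. Unset Strict Implicit. Unset Printing Implicit Defensive.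

Definition asbool (P : Prop) : bool :=
  if excluded_middle_informative P then true else false.

Lemma asboolP (P : Prop) : reflect P (asbool P).
Proof. by rewrite /asbool; case: excluded_middle_informative => h; constructor. Qed.

Section PropCycles.
Variable T : eqType.
Implicit Types (e : T -> T -> Prop) (s : seq T).

Lemma pathP_path e (x : T) s : pathP e x s <-> path (fun a b => asbool (e a b)) x s.
Proof.
elim: s x => [|y s IH] x //=.
by split=> [[/asboolP-> /IH] | /andP[/asboolP exy /IH]].
Qed.

Lemma cycleP_cycle e s : cycleP e s <-> cycle (fun a b => asbool (e a b)) s.
Proof. by case: s => [|x s] //=; apply: pathP_path. Qed.

Lemma cycleP_next e s (x : T) : cycleP e s -> x \in s -> e x (next s x).
Proof. by move=> /cycleP_cycle cyc xs; apply/asboolP; apply: next_cycle cyc xs. Qed.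

Lemma cycleP_propagate e (Q : T -> Prop) s :
  cycleP e s -> {in s &, forall a b, e a b -> Q a -> Q b} ->
  {in s &, forall y z, Q y -> Q z}.
Proof.
move=> /cycleP_cycle cyc eQ.
pose imp a b := asbool (Q a -> Q b).
have imp_trans : transitive imp.
  by move=> b a d /asboolP ab /asboolP bd; apply/asboolP => /ab/bd.
have : cycle imp s.
  apply: (sub_in_cycle (P := mem s)) cyc; last exact/allP.
  by move=> a b ha hb /asboolP /eQ ab; apply/asboolP; apply: ab.
by rewrite cycle_all2rel // => /allrelP imp_s y z hy hz; apply/asboolP/imp_s.
Qed.

Lemma next_propagate (Q : T -> Prop) s : uniq s ->
  {in s, forall a, Q a -> Q (next s a)} -> {in s &, forall y z, Q y -> Q z}.
Proof.
move=> us Qnext; apply: (cycleP_propagate (e := fun a b => b = next s a)).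
  by apply/cycleP_cycle; apply: sub_cycle (cycle_next us) => a b /eqP->; apply/asboolP.
by move=> a b ha _ ->; apply: Qnext.
Qed.

Lemma next_first_hit (p : pred T) s x : uniq s -> x \in s -> ~~ p x -> has p s ->
  exists pre y, [/\ fpath (next s) x (rcons pre y), all (predC p) pre, p y &
                    {subset rcons pre y <= s}].
Proof.
move=> us xs npx /hasP[z zs pz].
have := cycle_next us; rewrite -(rot_cycle (index x s)).
have := mem_rot (index x s) s; rewrite rot_index //=.
move: (drop _ _ ++ take _ _) => cs mem_cs cyc.
have has_cs : has p cs.
  apply/hasP; exists z => //; move: zs; rewrite -mem_cs inE => /orP[/eqP zx|//].
  by move: npx; rewrite -zx pz.
move: cyc mem_cs; case/split_find: has_cs => y pre post py npre cyc mem_cs.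
exists pre, y; split=> //.
- by move: cyc; rewrite rcons_cat cat_path => /andP[].
- by apply/allP => w wpre; apply/negP => pw; move/hasP: npre; apply; exists w.
- by move=> w w_pre; rewrite -mem_cs inE mem_cat w_pre orbT.
Qed.

Lemma index_next s x : uniq s -> x \in s -> index (next s x) s = (index x s).+1 %% size s.
Proof.
case: s => [|y s] // us xs; rewrite next_nth xs.
have : index x (y :: s) <= size s by rewrite -ltnS index_mem.
rewrite leq_eqVlt => /orP[/eqP->|lt_xs]; first by rewrite nth_default // modnn /= eqxx.
by rewrite modn_small ?ltnS // -[nth y s _]/(nth y (y :: s) _.+1) index_uniq.
Qed.

End PropCycles.

Lemma index_map_in (T T' : eqType) (f : T -> T') s x :
  {in s &, injective f} -> x \in s -> index (f x) (map f s) = index x s.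
Proof.
elim: s => //= y s IH f_inj xs; rewrite (inj_in_eq f_inj) ?mem_head //.
case: eqP => // nyx; have xs' : x \in s.
  by move: xs; rewrite inE => /orP[/eqP xy|//]; case: nyx.
by rewrite IH // => a b ? ?; apply: f_inj; rewrite inE; apply/orP; right.
Qed.

Lemma serial_trans_loop (T : eqType) (e : T -> T -> Prop) (U : seq T) :
  (forall a b d, e a b -> e b d -> e a d) ->
  (forall t, t \in U -> exists2 t', t' \in U & e t t') ->
  forall t0, t0 \in U -> exists2 t, t \in U & e t t.
Proof.
move=> e_trans; have [n] := ubnP (size U); elim: n U => // n IH U ltUn serial t0 t0U.
have [loop0|nloop0] := asboolP (e t0 t0); first by exists t0.
pose U' := [seq u <- U | asbool (e t0 u)].
have [t1 t1U e01] := serial t0 t0U.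
have t1U' : t1 \in U' by rewrite mem_filter t1U andbT; apply/asboolP.
have ltU'n : size U' < n.
  have : has (predC (fun u => asbool (e t0 u))) U.
    by apply/hasP; exists t0 => //=; apply/asboolP.
  rewrite has_count size_filter.
  by move: ltUn (count_predC (fun u => asbool (e t0 u)) U); lia.
have serial' : forall u, u \in U' -> exists2 u', u' \in U' & e u u'.
  move=> u; rewrite mem_filter => /andP[/asboolP e0u uU].
  have [u' u'U euu'] := serial u uU; exists u' => //.
  by rewrite mem_filter u'U andbT; apply/asboolP; apply: e_trans euu'.
have [t t_U' ett] := IH U' ltU'n serial' t1 t1U'.
by exists t => //; move: t_U'; rewrite mem_filter => /andP[].
Qed.

Lemma related_pair_or_free (T : eqType) (kq : rel T) (w : seq T) :
  reflexive kq -> symmetric kq ->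
  (exists a b d A B, w = a ++ A :: b ++ B :: d /\ kq A B) \/
  (uniq w /\ {in w &, forall A B, kq A B -> A = B}).
Proof.
move=> kq_refl kq_sym.
have [|nd] := classic (exists a b d A B, w = a ++ A :: b ++ B :: d /\ kq A B); first by left.
right; split.
  elim: w nd => [|x w IH] //= nd; apply/andP; split.
    apply/negP => xw; apply: nd; case/splitPr: xw => w1 w2.
    by exists [::], w1, w2, x, x.
  apply: IH => -[a [b [d [A [B [wE kAB]]]]]]; apply: nd.
  by exists (x :: a), b, d, A, B; rewrite wE.
move=> A B Aw Bw kAB; apply: NNPP => nAB; apply: nd.
case/splitPr: Aw Bw => w1 w2; rewrite mem_cat inE => /or3P[Bw1|/eqP BA|Bw2].
- case/splitPr: Bw1 => w3 w4; exists w3, w4, w2, B, A.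
  by rewrite -catA kq_sym.
- by case: nAB.
- by case/splitPr: Bw2 => w3 w4; exists w1, w3, w4, A, B.
Qed.

Lemma count_lt_sub (T : eqType) (p p' : pred T) s :
  subpred p' p -> (exists2 x, x \in s & p x && ~~ p' x) -> count p' s < count p s.
Proof.
move=> sub; elim: s => [|y s IH] [x] //; rewrite inE => /orP[/eqP->|xs] px /=.
  by case/andP: px => -> /negbTE ->; rewrite add0n add1n ltnS sub_count.
rewrite -addn1 -addnA addn1; apply: leq_add; last by apply: IH; exists x.
by case p'y: (p' y); rewrite // (sub _ p'y).
Qed.

Section Facts.
Variables (V D R : eqType) (S : schema R).
Implicit Types (F : atom V D R) (A B : fact D R) (th : V -> D) (s : seq (term V D)).

Lemma keyeq_refl A : keyeq S A A.
Proof. by rewrite /keyeq !eqxx. Qed.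

Lemma keyeq_rel A B : keyeq S A B -> frel A = frel B.
Proof. by case/andP=> /eqP. Qed.

Lemma keyeq_sym A B : keyeq S A B -> keyeq S B A.
Proof. by case/andP=> /eqP AB kAB; rewrite /keyeq -AB eqxx eq_sym. Qed.

Lemma keyeq_symmetric : symmetric (@keyeq D R S).
Proof. by move=> A B; apply/idP/idP; apply: keyeq_sym. Qed.

Lemma keyeq_trans A B C : keyeq S A B -> keyeq S B C -> keyeq S A C.
Proof.
case/andP=> /eqP AB /eqP kAB; case/andP=> /eqP BC kBC.
by rewrite -AB in kBC; rewrite /keyeq -BC -AB eqxx kAB.
Qed.

Definition term_val th (t : term V D) : D :=
  match t with inl x => th x | inr d => d end.

Lemma mem_vars_of x s : (x \in vars_of s) = (inl x \in s).
Proof. by elim: s => [|[y|d] s IH] //=; rewrite !inE IH. Qed.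

Lemma eq_map_term_val th th' s :
  {in vars_of s, th =1 th'} <-> map (term_val th) s = map (term_val th') s.
Proof.
rewrite -eq_in_map; split=> [agree [x|d] //= | agree x].
  by rewrite -mem_vars_of => /agree.
by rewrite mem_vars_of => /agree.
Qed.

Lemma frel_inst th F : frel (inst th F) = arel F.
Proof. by []. Qed.

Lemma inst_agree th th' F : inst th F = inst th' F -> {in vars F, th =1 th'}.
Proof. by case=> /eq_map_term_val. Qed.

Lemma keyeq_inst th th' F : {in key S F, th =1 th'} -> keyeq S (inst th F) (inst th' F).
Proof.
move=> /eq_map_term_val agree; rewrite /keyeq eqxx /=.
by rewrite -!map_take -[map _ _]/(map (term_val th) _) agree.
Qed.

Lemma repair_covers (g r : seq (fact D R)) A : repair S g r -> A \in g ->
  exists2 B, B \in r & keyeq S A B.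
Proof.
case=> rg [cr r_max] Ag; apply: NNPP => nB.
have Ar : A \in r.
  apply: (r_max (A :: r)); rewrite ?mem_head //.
  - by move=> X Xr; rewrite inE Xr orbT.
  - by move=> X; rewrite inE => /orP[/eqP->|/rg].
  move=> X Y; rewrite !inE => /orP[/eqP->|Xr] /orP[/eqP->|Yr] XY //.
  - by case: nB; exists Y.
  - by case: nB; exists X; last exact: keyeq_sym.
  - exact: cr.
by apply: nB; exists A; last exact: keyeq_refl.
Qed.

End Facts.

Section HookGraph.
Variables (V D R : eqType) (S : schema R) (q c : seq (atom V D R)).
Variable db : seq (fact D R).
Hypothesis q_sjf : sjf_query S q.
Hypothesis c_size : 2 <= size c.
Hypothesis c_mcycle : elem_mcycle S q c.
Hypothesis db_ok : database S q db.
Implicit Types (F G H : atom V D R) (A B : fact D R) (th : V -> D).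

Local Notation hC := (hookC S q c db).

Definition matches th := embeds_in q th (fun X => X \in db).

Lemma arel_inj : {in q &, injective (@arel V D R)}.
Proof.
case: q_sjf => _; elim: q => [|H q' IH] //= /andP[nH u] F G.
rewrite !inE => /orP[/eqP->|Fq'] /orP[/eqP->|Gq'] FG //.
- by move: nH; rewrite FG (map_f (@arel _ _ _) Gq').
- by move: nH; rewrite -FG (map_f (@arel _ _ _) Fq').
- exact: IH.
Qed.

Lemma c_sub : {subset c <= q}.
Proof. by case: c_mcycle => _ []. Qed.

Lemma c_uniq : uniq c.
Proof. by case: c_mcycle. Qed.

Lemma c_arel_inj : {in c &, injective (@arel V D R)}.
Proof. by move=> F G /c_sub Fq /c_sub Gq; apply: arel_inj. Qed.

Lemma medge_next F : F \in c -> medge S q F (next c F).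
Proof. by case: c_mcycle => _ [_ cyc]; apply: cycleP_next. Qed.

Lemma atom_inP A : reflect (exists2 F, F \in c & arel F = frel A) (atom_in c A).
Proof. by apply: (iffP hasP) => -[F Fc /eqP FA]; exists F. Qed.

Lemma atom_in_inst th F : F \in c -> atom_in c (inst th F).
Proof. by move=> Fc; apply/atom_inP; exists F. Qed.

Lemma atom_in_inst_mem th H : H \in q -> atom_in c (inst th H) -> H \in c.
Proof. by move=> Hq /atom_inP[G Gc GH]; rewrite (arel_inj Hq (c_sub Gc) (esym GH)). Qed.

Lemma matches_db th F : matches th -> F \in c -> inst th F \in db.
Proof. by move=> m /c_sub; apply: m. Qed.

(* Mode-c atoms with agreeing keys are mapped to key-equal, hence equal, facts. *)
Lemma matches_fd_agree th th' X y : matches th -> matches th' ->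
  fd_closure (Kc S q) X y -> {in X, th =1 th'} -> th y = th' y.
Proof.
move=> m m'; elim=> [x xX /(_ x xX) //|L Y z LY _ IH zY agree].
case/mapP: LY => G; rewrite mem_filter => /andP[Gc Gq] [eL eY]; subst L Y.
have key_agree : {in key S G, th =1 th'} by move=> x xk; apply: IH.
have inst_eq : inst th G = inst th' G.
  by case: db_ok => _; apply; [apply: m|apply: m'|apply: keyeq_inst|].
exact: inst_agree inst_eq z zY.
Qed.

Lemma hookC_witness A B : hC A B ->
  [/\ A \in db, atom_in c A, B \in db, atom_in c B &
      exists th F, [/\ matches th, F \in c, A = inst th F &
                       keyeq S B (inst th (next c F))]].
Proof.
case=> Adb [Ac [Bdb [Bc [[_ [th [F [G [m [FG [AF BG]]]]]]] [F0 [F0c [F0A F0B]]]]]]].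
have [Fq [Gq _]] := FG.
have eF : F = F0 by apply: arel_inj (c_sub F0c) _; rewrite // F0A AF.
have eG : G = next c F0.
  by apply: arel_inj (c_sub _) _; rewrite ?mem_next // F0B (keyeq_rel BG).
by subst; split=> //; exists th, F0.
Qed.

Lemma hookC_keyeq_uniq A B B' : hC A B -> hC A B' -> keyeq S B B'.
Proof.
case/hookC_witness=> _ _ _ _ [th [F [m Fc AF BF]]].
case/hookC_witness=> _ _ _ _ [th' [F' [m' F'c AF' BF']]].
have eF : F = F' by apply: c_arel_inj; rewrite // -(frel_inst th F) -AF AF'.
subst F'; have agree : {in vars F, th =1 th'} by apply: inst_agree; rewrite -AF.
have key_next : keyeq S (inst th (next c F)) (inst th' (next c F)).
  have [_ [_ [_ fd]]] := medge_next Fc.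
  by apply: keyeq_inst => x /fd cl; apply: matches_fd_agree m m' cl agree.
exact: keyeq_trans BF (keyeq_trans key_next (keyeq_sym BF')).
Qed.

Lemma hookC_keyeq_target A B B' : hC A B -> B' \in db -> keyeq S B B' -> hC A B'.
Proof.
case=> Adb [Ac [_ [Bc [[_ [th [F [G [m [FG [AF BG]]]]]]] [F0 [F0c [F0A F0B]]]]]]] B'db BB'.
have eB : frel B = frel B' := keyeq_rel BB'.
do 4 (split=> //); first by rewrite /atom_in -eB.
split; last by exists F0; rewrite -eB.
split=> //; exists th, F, G; do 3 (split=> //).
exact: keyeq_trans (keyeq_sym BB') BG.
Qed.

Lemma matches_hookC th F : matches th -> F \in c ->
  hC (inst th F) (inst th (next c F)).
Proof.
move=> m Fc; have Nc : next c F \in c by rewrite mem_next.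
do 4 (split; rewrite ?matches_db ?atom_in_inst //).
split; last by exists F.
split; first exact: matches_db.
exists th, F, (next c F); split=> //; split; first exact: medge_next.
by split=> //; apply: keyeq_refl.
Qed.

Lemma hookC_rel_neq A B : hC A B -> frel A <> frel B.
Proof.
case=> _ [_ [_ [_ [[_ [th [F [G [_ [[Fq [Gq [FG _]]] [AF BG]]]]]]] _]]]] AB.
apply: FG; apply: arel_inj => //.
by rewrite -(frel_inst th F) -(frel_inst th G) -AF AB (keyeq_rel BG).
Qed.

Lemma matches_embedding th : matches th ->
  embedding S q c db 1 (map (inst th) c) /\ relevant q db (map (inst th) c).
Proof.
move=> m; split; last first.
  by exists th; split=> // _ /mapP[F Fc ->]; exists F; rewrite ?c_sub.
have inst_inj : {in c &, injective (inst th)}.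
  by move=> F G Fc Gc [FG _]; apply: c_arel_inj.
split; first by rewrite map_inj_in_uniq ?c_uniq.
split; first by rewrite size_map mul1n.
split; first by rewrite size_map; apply: leq_trans c_size.
split; first by move=> _ /mapP[F Fc ->]; rewrite matches_db ?atom_in_inst.
split.
  apply/cycleP_cycle; rewrite cycle_map.
  apply: (sub_in_cycle (P := mem c)) (cycle_next c_uniq); last exact/allP.
  by move=> F G Fc _ /eqP<-; apply/asboolP; apply: matches_hookC.
by move=> _ _ /mapP[F Fc ->] /mapP[G Gc ->] /keyeq_rel /c_arel_inj ->.
Qed.

Definition atom_pos A := index (frel A) (map (@arel V D R) c).

Lemma atom_pos_lt A : atom_in c A -> atom_pos A < size c.
Proof.
by case/atom_inP=> F Fc FA; rewrite /atom_pos -FA -(size_map (@arel V D R)) index_mem map_f.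
Qed.

Lemma hookC_atom_pos A B : hC A B -> atom_pos B = (atom_pos A).+1 %% size c.
Proof.
case/hookC_witness=> _ _ _ _ [th [F [_ Fc -> /keyeq_rel BF]]].
rewrite /atom_pos BF !frel_inst !index_map_in ?mem_next //; try exact: c_arel_inj.
exact: index_next c_uniq Fc.
Qed.

Lemma hookC_path_atom_pos x s : atom_in c x -> pathP hC x s ->
  atom_pos (last x s) = (atom_pos x + size s) %% size c.
Proof.
elim: s x => [|y s IH] x xc /=; first by rewrite addn0 modn_small ?atom_pos_lt.
case=> xy ys; have [_ _ _ yc _] := hookC_witness xy.
by rewrite IH // (hookC_atom_pos xy) modnDml addSnnS.
Qed.

Lemma hookC_cycle_dvd w : cycleP hC w -> size c %| size w.
Proof.
case: w => [|x s] //= cyc.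
have xc : atom_in c x.
  by case: s cyc => [|y s] /= [/hookC_witness[]].
have := hookC_path_atom_pos xc cyc; rewrite last_rcons size_rcons.
rewrite -[in LHS](modn_small (atom_pos_lt xc)) -[in LHS](addn0 (atom_pos x)).
by move/eqP; rewrite eqn_modDl mod0n eq_sym /dvdn.
Qed.

Lemma hookC_cycle_embedding w : w != [::] -> uniq w ->
  {in w &, forall A B, keyeq S A B -> A = B} -> cycleP hC w ->
  embedding S q c db (size w %/ size c) w /\ 0 < size w %/ size c.
Proof.
move=> w0 uw kw cyc; have c_pos : 0 < size c := ltnW c_size.
have w_pos : 0 < size w by case: (w) w0.
split; last by rewrite divn_gt0 // dvdn_leq // hookC_cycle_dvd.
split=> //; split; first by rewrite divnK // hookC_cycle_dvd.
split=> //; split; first by move=> A /(cycleP_next cyc) /hookC_witness[Adb Ac _ _ _].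
by split=> // A B Aw Bw; apply: kw.
Qed.

Lemma relevant_embedding_match w : embedding S q c db 1 w -> relevant q db w ->
  exists th, matches th /\ w =i map (inst th) c.
Proof.
case=> uw [sz [_ [wdb _]]] [th [m wq]]; exists th; split=> //.
have sub : {subset w <= map (inst th) c}.
  move=> A Aw; have [F Fq AF] := wq A Aw; have [_ /atom_inP[G Gc GA]] := wdb A Aw.
  have FG : F = G by apply: (arel_inj Fq (c_sub Gc)); rewrite GA AF.
  by rewrite AF FG map_f.
have w_size : size (map (inst th) c) <= size w by rewrite size_map sz mul1n.
by have [_ w_eq] := uniq_min_size uw sub w_size.
Qed.

Lemma embedding_of_match n e th : embedding S q c db n e -> matches th ->
  {subset map (inst th) c <= e} -> n = 1 /\ relevant q db e.
Proof.
case=> ue [sz [e_pos [_ [cyc kf]]]] m sub.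
have [F Fc] : exists F, F \in c by case: (c) c_size => [|F ?] //; exists F; rewrite mem_head.
have e_sub : {subset e <= map (inst th) c}.
  have step : {in e &, forall a b, hC a b -> a \in map (inst th) c -> b \in map (inst th) c}.
    move=> a b ae be ab /mapP[G Gc aG].
    have nGc : next c G \in c by rewrite mem_next.
    have aG' : hC a (inst th (next c G)) by rewrite aG; apply: matches_hookC.
    by rewrite (kf _ _ be (sub _ (map_f _ nGc)) (hookC_keyeq_uniq ab aG')) map_f.
  move=> A Ae; apply: (cycleP_propagate cyc step (sub _ (map_f _ Fc))) => //.
  exact: map_f.
split; last by exists th; split=> // A /e_sub/mapP[G Gc ->]; exists G; rewrite ?c_sub.
have := uniq_leq_size ue e_sub; rewrite size_map sz; rewrite sz in e_pos.
by move: c_size; nia.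
Qed.

Section MinimalConds.
Variable o : seq (fact D R).
Hypothesis o_min : minimal_conds S q c db o.

Lemma o_sub_db : {subset o <= db}.
Proof. by case: o_min => -[]. Qed.

Lemma o_dangling A : A \in db -> atom_in c A -> (forall B, ~ hC A B) -> A \in o.
Proof. by case: o_min => -[_ [dangling _]] _; apply: dangling. Qed.

Lemma o_irrelevant e : embedding S q c db 1 e -> ~ relevant q db e -> {subset e <= o}.
Proof. by case: o_min => -[_ [_ [irr _]]] _; apply: irr. Qed.

Lemma o_multiple n e : 2 <= n -> embedding S q c db n e -> {subset e <= o}.
Proof. by case: o_min => -[_ [_ [_ [mult _]]]] _; apply: mult. Qed.

Lemma o_relevant e : embedding S q c db 1 e -> relevant q db e ->
  has (fun A => A \in o) e -> {subset e <= o}.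
Proof. by case: o_min => -[_ [_ [_ [_ [rel _]]]]] _; apply: rel. Qed.

Lemma o_block A B : A \in o -> B \in db -> keyeq S A B -> B \in o.
Proof. by case: o_min => -[_ [_ [_ [_ [_ block]]]]] _ Ao; apply: block. Qed.

Lemma o_matches_closed th F G : matches th -> F \in c -> G \in c ->
  inst th F \in o -> inst th G \in o.
Proof.
move=> m Fc Gc Fo; have [emb rel] := matches_embedding m.
have Fo' : has (fun A => A \in o) (map (inst th) c).
  by apply/hasP; exists (inst th F); rewrite ?map_f.
exact: (o_relevant emb rel Fo' (map_f _ Gc)).
Qed.

Lemma o_filter_closed (p : pred (fact D R)) :
  conds S q c db (filter p o) -> {in o, forall A, p A}.
Proof.
move=> conds_p A Ao; case: o_min => _ o_least.
have sub : {subset filter p o <= o} by move=> B; rewrite mem_filter => /andP[].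
by have := o_least _ sub conds_p A Ao; rewrite mem_filter => /andP[].
Qed.

Lemma o_atom_in : {in o, forall A, atom_in c A}.
Proof.
have emb_c n e A : embedding S q c db n e -> A \in e -> atom_in c A.
  by case=> _ [_ [_ [e_db _]]] /e_db[].
apply: o_filter_closed; split.
  by move=> A; rewrite mem_filter => /andP[_ /o_sub_db].
split; first by move=> A Adb Ac dangling; rewrite mem_filter Ac o_dangling.
split.
  by move=> e emb irr A Ae; rewrite mem_filter (emb_c _ _ _ emb Ae) (o_irrelevant emb irr).
split.
  by move=> n e n2 emb A Ae; rewrite mem_filter (emb_c _ _ _ emb Ae) (o_multiple n2 emb).
split.
  move=> e emb rel /hasP[B Be]; rewrite mem_filter => /andP[_ Bo] A Ae.
  by rewrite mem_filter (emb_c _ _ _ emb Ae) (o_relevant emb rel) //; apply/hasP; exists B.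
move=> A; rewrite mem_filter => /andP[Ac Ao] B Bdb AB.
by rewrite mem_filter (o_block Ao Bdb AB) andbT /atom_in -(keyeq_rel AB).
Qed.

Definition covers (P : seq (fact D R)) A := has (keyeq S A) P.

Lemma covers_sub P P' A : {subset P <= P'} -> covers P A -> covers P' A.
Proof. by move=> sub /hasP[B /sub BP' AB]; apply/hasP; exists B. Qed.

Lemma covers_keyeq P A B : keyeq S A B -> covers P B -> covers P A.
Proof. by move=> AB /hasP[X XP BX]; apply/hasP; exists X; last exact: keyeq_trans AB BX. Qed.

Lemma covers_mem P A : A \in P -> covers P A.
Proof. by move=> AP; apply/hasP; exists A; last exact: keyeq_refl. Qed.

(* Hook closure is what lets the last clause survive the addition of facts. *)
Definition partial_repair P :=
  [/\ {subset P <= o}, consistent S P,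
      (forall A B, A \in P -> hC A B -> covers P B) &
      (forall th, matches th -> ~ {subset map (inst th) c <= P})].

Definition forced_embedding n e :=
  embedding S q c db n e /\ (2 <= n \/ n = 1 /\ ~ relevant q db e).

Lemma forced_embedding_sub n e : forced_embedding n e -> {subset e <= o}.
Proof. by case=> emb [n2|[n1 irr]]; [apply: o_multiple n2 emb|subst n; apply: o_irrelevant]. Qed.

Lemma consistent_cat P P' : consistent S P -> consistent S P' ->
  {in P, forall A, ~~ covers P' A} -> consistent S (P ++ P').
Proof.
move=> cP cP' nc A B; rewrite !mem_cat => /orP[AP|AP'] /orP[BP|BP'] AB.
- exact: cP.
- by case/negP: (nc A AP); apply/hasP; exists B.
- by case/negP: (nc B BP); apply/hasP; exists A; last exact: keyeq_sym.
- exact: cP'.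
Qed.

Lemma partial_repair_cons P A : partial_repair P -> A \in o -> ~~ covers P A ->
  (forall B, hC A B -> covers P B) -> partial_repair (A :: P).
Proof.
case=> Po cP closedP no_matchP Ao nA succA.
have subP : {subset P <= A :: P} by move=> X XP; rewrite inE XP orbT.
split.
- by move=> X; rewrite inE => /orP[/eqP->|/Po].
- apply: (consistent_cat (P := [:: A])) => //; last by move=> X; rewrite inE => /eqP->.
  by move=> X Y; rewrite !inE => /eqP-> /eqP->.
- move=> X B; rewrite inE => /orP[/eqP->|XP] XB; apply: covers_sub subP _.
    exact: succA.
  exact: closedP XB.
move=> th m sub; have [F Fc AF] : exists2 F, F \in c & inst th F = A.
  apply: NNPP => nF; apply: (no_matchP th m) => _ /mapP[G Gc ->].
  by have := sub _ (map_f _ Gc); rewrite inE => /orP[/eqP GA|//]; case: nF; exists G.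
have pFc : prev c F \in c by rewrite mem_prev.
have hp := matches_hookC m pFc; rewrite next_prev ?c_uniq // AF in hp.
have := sub _ (map_f _ pFc); rewrite inE => /orP[/eqP pA|pP].
  by rewrite pA in hp; apply: (hookC_rel_neq hp).
by case/negP: nA; apply: closedP hp.
Qed.

Lemma partial_repair_cat P n e : partial_repair P -> forced_embedding n e ->
  {in e, forall A, ~~ covers P A} -> partial_repair (e ++ P).
Proof.
case=> Po cP closedP no_matchP forced nc; have eo := forced_embedding_sub forced.
have [emb n_forced] := forced; have [ue [_ [_ [_ [cyc kf]]]]] := emb.
have subl : {subset e <= e ++ P} by move=> X Xe; rewrite mem_cat Xe.
have subr : {subset P <= e ++ P} by move=> X XP; rewrite mem_cat XP orbT.
split.
- by move=> X; rewrite mem_cat => /orP[/eo|/Po].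
- exact: consistent_cat.
- move=> X B; rewrite mem_cat => /orP[Xe|XP] XB; last exact: covers_sub subr (closedP _ _ XP XB).
  have Xnext := cycleP_next cyc Xe.
  apply: covers_keyeq (hookC_keyeq_uniq XB Xnext) (covers_mem _).
  by rewrite subl ?mem_next.
move=> th m sub.
have outside_e_closed : {in c &, forall F G, inst th F \notin e -> inst th G \notin e}.
  apply: next_propagate c_uniq _ => F Fc Fe.
  have FP : inst th F \in P by move: (sub _ (map_f _ Fc)); rewrite mem_cat (negbTE Fe).
  have := closedP _ _ FP (matches_hookC m Fc).
  by apply: contraL => /nc.
have [F Fc Fe] : exists2 F, F \in c & inst th F \in e.
  apply: NNPP => nF; apply: (no_matchP th m) => _ /mapP[G Gc ->].
  by move: (sub _ (map_f _ Gc)); rewrite mem_cat => /orP[Ge|//]; case: nF; exists G.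
have all_e : {subset map (inst th) c <= e}.
  move=> _ /mapP[G Gc ->]; apply: contraLR Fe.
  exact: outside_e_closed.
have [n1 rel] := embedding_of_match emb m all_e.
by case: n_forced => [|[_ irr]]; [rewrite n1|apply: irr].
Qed.

Lemma embedding_covers_all P n e : embedding S q c db n e -> {subset e <= o} ->
  {in o, forall X Y, hC X Y -> covers P Y -> covers P X} ->
  has (covers P) e -> {in e, forall A, covers P A}.
Proof.
case=> _ [_ [_ [_ [cyc _]]]] eo back /hasP[X Xe cX] A Ae; apply: contraLR cX.
apply: (cycleP_propagate (Q := fun a => ~~ covers P a) cyc _ Ae Xe) => a b ae _ ab.
by apply: contra; apply: (back a (eo a ae) b ab).
Qed.

Lemma conds_covered P :
  (forall A, A \in o -> ~~ covers P A -> exists2 B, hC A B & ~~ covers P B) ->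
  (forall n e, forced_embedding n e -> has (covers P) e) ->
  conds S q c db (filter (covers P) o).
Proof.
move=> escape forced_met.
have back : {in o, forall X Y, hC X Y -> covers P Y -> covers P X}.
  move=> X Xo Y XY cY; apply: contraT => /(escape X Xo)[B XB nB].
  by case/negP: nB; apply: covers_keyeq (hookC_keyeq_uniq XB XY) cY.
have forced_sub n e : forced_embedding n e -> {subset e <= filter (covers P) o}.
  move=> fe A Ae; have [emb _] := fe; have eo := forced_embedding_sub fe.
  by rewrite mem_filter eo // (embedding_covers_all emb eo back (forced_met n e fe)).
split; first by move=> A; rewrite mem_filter => /andP[_ /o_sub_db].
split.
  move=> A Adb Ac dangling; have Ao := o_dangling Adb Ac dangling.
  rewrite mem_filter Ao andbT; apply: contraT => /(escape A Ao)[B AB _].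
  by case: (dangling B).
split; first by move=> e emb irr; apply: (forced_sub 1); split=> //; right.
split; first by move=> n e n2 emb; apply: (forced_sub n); split=> //; left.
split.
  move=> e emb rel /hasP[B Be]; rewrite mem_filter => /andP[cB Bo].
  have eo : {subset e <= o} by apply: o_relevant => //; apply/hasP; exists B.
  move=> A Ae; rewrite mem_filter eo // andbT.
  by apply: (embedding_covers_all emb eo back) => //; apply/hasP; exists B.
move=> A; rewrite mem_filter => /andP[cA Ao] B Bdb AB.
by rewrite mem_filter (o_block Ao Bdb AB) andbT (covers_keyeq (keyeq_sym AB) cA).
Qed.

Lemma partial_repair_extend P : partial_repair P ->
  exists2 r, partial_repair r & {in o, forall A, covers r A}.
Proof.
have [k] := ubnP (count (fun A => ~~ covers P A) o); elim: k P => // k IH P lt_k rP.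
have shrink P' : {subset P <= P'} -> (exists2 A, A \in o & ~~ covers P A && covers P' A) ->
    count (fun A => ~~ covers P' A) o < k.
  move=> sub [A Ao nA]; rewrite -ltnS; apply: leq_trans lt_k.
  apply: count_lt_sub; last by exists A; rewrite ?negbK.
  by move=> X; apply: contra; apply: covers_sub sub.
have [[A [Ao nA succA]]|no_single] :=
  classic (exists A, [/\ A \in o, ~~ covers P A & forall B, hC A B -> covers P B]).
  apply: (IH (A :: P)) (partial_repair_cons rP Ao nA succA); apply: shrink.
    by move=> X XP; rewrite inE XP orbT.
  by exists A; rewrite // nA covers_mem ?mem_head.
have [[n [e [fe nc]]]|no_seed] :=
  classic (exists n e, forced_embedding n e /\ {in e, forall A, ~~ covers P A}).
  apply: (IH (e ++ P)) (partial_repair_cat rP fe nc); apply: shrink.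
    by move=> X XP; rewrite mem_cat XP orbT.
  have [[_ [_ [e_pos _]]] _] := fe; case: e e_pos fe nc => // A e _ fe nc.
  exists A; first by apply: (forced_embedding_sub fe); rewrite mem_head.
  by rewrite nc ?covers_mem ?mem_head.
exists P => //; apply: o_filter_closed; apply: conds_covered.
  move=> A Ao nA; apply: NNPP => no_escape; apply: no_single; exists A; split=> // B AB.
  by apply: contraT => nB; case: no_escape; exists B.
by move=> n e fe; apply: contraT => /hasPn nc; case: no_seed; exists n, e.
Qed.

Lemma o_garbage : garbage S q c db o.
Proof.
have empty_repair : partial_repair [::].
  split=> // th m sub; have [F Fc] : exists F, F \in c.
    by case: (c) c_size => [|F ?] //; exists F; rewrite mem_head.
  by have := sub _ (map_f (inst th) Fc).
have [r [ro cr _ no_match] cov] := partial_repair_extend empty_repair.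
split; first exact: o_sub_db.
split; first by move=> A Ao; split=> [|B]; [apply: o_atom_in|apply: o_block].
exists r; split.
  split=> //; split=> // r' rr' r'o cr' X Xr'.
  by have /hasP[B Br XB] := cov X (r'o X Xr'); rewrite (cr' X B Xr' (rr' B Br) XB).
move=> th emb F Fc; apply/negP => Fr.
have m : matches th by move=> H Hq; case: (emb H Hq) => [[]|/ro/o_sub_db].
apply: (no_match th m) => _ /mapP[G Gc ->].
case: (emb G (c_sub Gc)) => [[_ /negP Go]|//].
by case: Go; apply: o_matches_closed m Fc Gc (ro _ Fr).
Qed.

Section Maximality.
Variables g r : seq (fact D R).
Hypothesis g_db : {subset g <= db}.
Hypothesis g_closed : forall A, A \in g ->
  atom_in c A /\ (forall B, B \in db -> keyeq S A B -> B \in g).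
Hypothesis r_repair : repair S g r.
Hypothesis r_kills : forall th, embeds_in q th (fun X => (X \in db /\ X \notin g) \/ X \in r) ->
  forall F, F \in c -> inst th F \notin r.

(* [kept] facts are those of the repaired database (db \ g) u r outside [o];
   the [stray] ones come from [r]. *)
Definition stray A := (A \in r) && (A \notin o).
Definition kept A := [&& A \in db, A \notin o & (A \in r) || (A \notin g)].
Definition kept_hook A B := asbool (hC A B /\ kept A /\ kept B).
Definition replaced th H := (inst th H \in g) && (inst th H \notin r).

Lemma r_sub_g : {subset r <= g}.
Proof. by case: r_repair. Qed.

Lemma stray_kept A : stray A -> kept A.
Proof. by case/andP=> Ar Ao; rewrite /kept Ao Ar g_db ?r_sub_g. Qed.

Lemma stray_replaced th F : matches th -> F \in c -> inst th F \in r ->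
  exists2 H, H \in c & replaced th H.
Proof.
move=> m Fc Fr; apply: NNPP => none.
suff emb : embeds_in q th (fun X => (X \in db /\ X \notin g) \/ X \in r).
  by move: Fr; apply/negP; apply: r_kills emb F Fc.
move=> H Hq.
have [Hr|Hnr] := boolP (inst th H \in r); [right|left; split; first exact: m] => //.
apply/negP => Hg; apply: none; exists H; last by rewrite /replaced Hg.
by apply: atom_in_inst_mem Hq (proj1 (g_closed Hg)).
Qed.

Lemma kept_inst th H : matches th -> H \in c -> inst th H \notin o ->
  ~~ replaced th H -> kept (inst th H).
Proof.
by move=> m Hc Ho; rewrite /replaced negb_and negbK orbC => rep; rewrite /kept matches_db ?Ho.
Qed.

Lemma kept_match_path th F pre : matches th -> {subset F :: pre <= c} ->
  {in F :: pre, forall a, kept (inst th a)} -> fpath (next c) F pre ->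
  path kept_hook (inst th F) (map (inst th) pre).
Proof.
move=> m pre_c kept_pre walk; rewrite path_map.
apply: (sub_in_path (P := mem (F :: pre))) walk; last exact/allP.
move=> a b ain bin /eqP nab; subst b; apply/asboolP.
by split; [apply: matches_hookC m (pre_c a ain)|split; apply: kept_pre].
Qed.

Lemma stray_walk A : stray A -> exists s, [/\ path kept_hook A s, s != [::] & stray (last A s)].
Proof.
move=> strayA; have /andP[Ar Ao] := strayA; have Ag := r_sub_g Ar.
have [B AB] : exists B, hC A B.
  apply: NNPP => nB; move/negP: Ao; apply; apply: o_dangling (g_db Ag) (proj1 (g_closed Ag)) _.
  by move=> B AB; apply: nB; exists B.
have [_ _ _ _ [th [F [m Fc AF _]]]] := hookC_witness AB; subst A.
have outside_o G : G \in c -> inst th G \notin o.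
  by move=> Gc; apply/negP => /(o_matches_closed m Gc Fc); apply/negP.
have [H Hc repH] := stray_replaced m Fc Ar.
have Fkept : ~~ replaced th F by rewrite /replaced Ar andbF.
have [pre [H' [walk kept_pre repH' walk_c]]] :=
  next_first_hit c_uniq Fc Fkept (introT hasP (ex_intro2 _ _ H Hc repH)).
have pre_c : {subset F :: pre <= c}.
  move=> a; rewrite inE => /orP[/eqP->//|apre].
  by apply: walk_c; rewrite mem_rcons inE apre orbT.
have H'c : H' \in c by apply: walk_c; rewrite mem_rcons mem_head.
have kept_walk : {in F :: pre, forall a, kept (inst th a)}.
  move=> a; rewrite inE => /orP[/eqP->|apre]; first exact: stray_kept.
  have ac : a \in c by apply: pre_c; rewrite inE apre orbT.
  by apply: kept_inst m ac (outside_o a ac) _; apply: (allP kept_pre).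
have /andP[H'g H'r] := repH'.
have [rho rho_r H'rho] := repair_covers r_repair H'g.
have rho_kept : kept rho.
  rewrite /kept rho_r g_db ?r_sub_g // andbT.
  apply/negP => /o_block /(_ (matches_db m H'c) (keyeq_sym H'rho)).
  by apply/negP; apply: outside_o.
move: walk; rewrite rcons_path => /andP[walk /eqP lastH'].
have last_rho : hC (inst th (last F pre)) rho.
  apply: hookC_keyeq_target (matches_hookC m (pre_c _ (mem_last F pre))) _ _.
    by case/and3P: rho_kept.
  by rewrite lastH'.
exists (rcons (map (inst th) pre) rho); split.
- rewrite rcons_path kept_match_path //= last_map; apply/asboolP.
  by rewrite kept_walk ?mem_last.
- by case: (map _ _).
- by rewrite last_rcons /stray rho_r; case/and3P: rho_kept.
Qed.

Lemma stray_closed_walk A : stray A ->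
  exists Y rest, stray Y /\ cycle kept_hook (Y :: rest).
Proof.
move=> strayA.
pose reach a b := exists s, [/\ s != [::], path kept_hook a s & last a s = b].
have reach_trans a b d : reach a b -> reach b d -> reach a d.
  move=> [s1 [s1_nil p1 l1]] [s2 [_ p2 l2]]; exists (s1 ++ s2).
  by rewrite cat_path p1 l1 p2 last_cat l1; case: (s1) s1_nil.
pose U := [seq t <- r | stray t].
have [Y YU [s [s_nil walk sY]]] : exists2 Y, Y \in U & reach Y Y.
  apply: (serial_trans_loop reach_trans _ (t0 := A)).
    move=> t; rewrite mem_filter => /andP[strayt _].
    have [s [p s_nil ls]] := stray_walk strayt; exists (last t s); last by exists s.
    by rewrite mem_filter ls; case/andP: ls.
  by rewrite mem_filter strayA; case/andP: strayA.
move: YU; rewrite mem_filter => /andP[strayY _]; exists Y.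
case/lastP: s s_nil walk sY => [//|rest z] _ walk; rewrite last_rcons => zY.
by subst z; exists rest.
Qed.

Lemma kept_hook_cycle_kept Y rest : cycle kept_hook (Y :: rest) -> all kept rest.
Proof.
rewrite /= rcons_path => /andP[walk _]; elim: rest Y walk => //= Z rest IH Y.
by case/andP=> /asboolP[_ [_ ->]] /IH.
Qed.

Lemma kept_keyeq_stray Y B : stray Y -> kept B -> keyeq S Y B -> B = Y.
Proof.
case/andP=> Yr _ /and3P[Bdb _ /orP[Br|Bg]] YB.
  by case: r_repair => _ [cr _]; apply: cr Br Yr (keyeq_sym YB).
by have [_ /(_ B Bdb YB)] := g_closed (r_sub_g Yr); rewrite (negbTE Bg).
Qed.

Lemma kept_cycle_shorten Y rest : stray Y -> cycle kept_hook (Y :: rest) ->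
  exists rest', [/\ cycle kept_hook (Y :: rest'), uniq (Y :: rest') &
                    {in Y :: rest' &, forall A B, keyeq S A B -> A = B}].
Proof.
move=> strayY; have [n] := ubnP (size rest); elim: n rest => // n IH rest lt_n cyc.
have [[a [b [d [A [B [restE AB]]]]]]|[u kf]] := related_pair_or_free (Y :: rest)
  (@keyeq_refl D R S) (@keyeq_symmetric D R S); last by exists rest.
have /allP kept_rest := kept_hook_cycle_kept cyc.
case: a restE => [|Z a] /= [YA restE].
  subst A rest; have BY : B = Y.
    by apply: kept_keyeq_stray; rewrite // kept_rest // mem_cat mem_head orbT.
  subst B; apply: (IH d); first by move: lt_n; rewrite size_cat /=; lia.
  by move: cyc; rewrite /= rcons_cat cat_path /= => /andP[_ /andP[]].
subst Z rest; apply: (IH (a ++ B :: d)).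
  by move: lt_n; rewrite !size_cat /= size_cat /=; lia.
move: cyc; rewrite /= !rcons_cat !cat_path /= rcons_cat cat_path /=.
case/and4P=> walk_a /asboolP[hA [kl _]] _ /andP[_ walk_d].
have kB : kept B by apply: kept_rest; rewrite !mem_cat inE mem_cat mem_head !orbT.
rewrite walk_a walk_d andbT; apply/asboolP; split=> //.
by apply: hookC_keyeq_target hA _ AB; case/and3P: kB.
Qed.

Lemma no_stray_cycle Y rest : stray Y -> cycle kept_hook (Y :: rest) ->
  uniq (Y :: rest) -> {in Y :: rest &, forall A B, keyeq S A B -> A = B} -> False.
Proof.
move=> strayY cyc u kf; have /andP[Yr Yo] := strayY.
have hcyc : cycleP hC (Y :: rest).
  by apply/cycleP_cycle; apply: sub_cycle cyc => A B /asboolP[AB _]; apply/asboolP.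
have [emb n_pos] := hookC_cycle_embedding (isT : Y :: rest != [::]) u kf hcyc.
have Yw : Y \in Y :: rest := mem_head _ _.
case: (ltngtP (size (Y :: rest) %/ size c) 1) => [|n_gt1|n1]; first by rewrite ltnNge n_pos.
  by move/negP: Yo; apply; apply: o_multiple n_gt1 emb _ Yw.
rewrite n1 in emb.
have [rel|irr] := classic (relevant q db (Y :: rest)); last first.
  by move/negP: Yo; apply; apply: o_irrelevant emb irr _ Yw.
have [th [m w_eq]] := relevant_embedding_match emb rel.
have /mapP[F Fc YF] : Y \in map (inst th) c by rewrite -w_eq.
have kept_w : all kept (Y :: rest) by rewrite /= stray_kept // (kept_hook_cycle_kept cyc).
suff repaired : embeds_in q th (fun X => (X \in db /\ X \notin g) \/ X \in r).
  by move: Yr; rewrite YF; apply/negP; apply: r_kills repaired F Fc.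
move=> H Hq.
have [Hg|Hng] := boolP (inst th H \in g); last by left; split=> //; apply: m.
have Hc := atom_in_inst_mem Hq (proj1 (g_closed Hg)).
have /and3P[_ _] := allP kept_w _ (etrans (w_eq _) (map_f _ Hc)).
by rewrite Hg orbF; right.
Qed.

Lemma garbage_sub_o : {subset g <= o}.
Proof.
move=> A Ag; apply: contraT => Ao.
have [B Br AB] := repair_covers r_repair Ag.
have strayB : stray B.
  rewrite /stray Br; apply: contra Ao => Bo.
  by apply: o_block Bo (g_db Ag) (keyeq_sym AB).
have [Y [rest [strayY cyc]]] := stray_closed_walk strayB.
have [rest' [cyc' u kf]] := kept_cycle_shorten strayY cyc.
by case: (no_stray_cycle strayY cyc' u kf).
Qed.

End Maximality.

Lemma minimal_conds_max_garbage : max_garbage S q c db o.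
Proof.
split; first exact: o_garbage.
by move=> g [g_db [g_closed [r [r_repair r_kills]]]]; apply: garbage_sub_o r_repair r_kills.
Qed.

End MinimalConds.
End HookGraph.

Theorem lemma19 (V D R : eqType) (S : schema R)
  (q c : seq (atom V D R)) (db o : seq (fact D R)) :
  schema_ok S ->
  sjf_query S q ->
  2 <= size c ->
  elem_mcycle S q c ->
  database S q db ->
  minimal_conds S q c db o ->
  max_garbage S q c db o.
Proof. by move=> _ q_sjf c_size c_mcycle db_ok; apply: minimal_conds_max_garbage. Qed.
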